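(* Let $B$ be the open unit disk and $U=(u,v)\in C^1(\overline B;\mathbb R^2)$ be harmonic in $B$ with $\det DU>0$ on $\partial B$. Then $\det DU>0$ everywhere in $B$ if and only if there exists $\alpha\in[0,2\pi]$ such that $\nabla u_\alpha\neq0$ everywhere in $B$, where $u_\alpha=\cos(\alpha)u+\sin(\alpha)v$. *)

From Stdlib Require Import Reals.
From Coquelicot Require Import Coquelicot.
Open Scope R_scope.

Definition in_B (x y : R) : Prop := x ^ 2 + y ^ 2 < 1.
Definition in_closB (x y : R) : Prop := x ^ 2 + y ^ 2 <= 1.
Definition in_bdB (x y : R) : Prop := x ^ 2 + y ^ 2 = 1.

Definition cont_within (D : R -> R -> Prop) (f : R -> R -> R) (x y : R) : Prop :=
  forall eps : R, 0 < eps -> exists delta : R, 0 < delta /\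
    forall x' y' : R, D x' y' -> Rabs (x' - x) < delta -> Rabs (y' - y) < delta ->
      Rabs (f x' y' - f x y) < eps.

Definition dx (f : R -> R -> R) (x y : R) : R := Derive (fun t => f t y) x.
Definition dy (f : R -> R -> R) (x y : R) : R := Derive (fun t => f x t) y.

(* f ∈ C^1(closure B) with fx, fy the (continuous extensions to the closed
   disk of the) partial derivatives: f is continuous on the closed disk, its
   partial derivatives exist in B and equal fx, fy there, and fx, fy are
   continuous on the closed disk. *)
Definition C1_closB (f fx fy : R -> R -> R) : Prop :=
  (forall x y, in_B x y ->
     is_derive (fun t => f t y) x (fx x y) /\ is_derive (fun t => f x t) y (fy x y)) /\
  (forall x y, in_closB x y ->
     cont_within in_closB f x y /\ cont_within in_closB fx x y /\
     cont_within in_closB fy x y).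

Definition harmonic_B (f fx fy : R -> R -> R) : Prop :=
  (forall x y, in_B x y ->
     is_derive (fun t => f t y) x (fx x y) /\ is_derive (fun t => f x t) y (fy x y)) /\
  exists fxx fxy fyx fyy : R -> R -> R,
    forall x y, in_B x y ->
      is_derive (fun t => fx t y) x (fxx x y) /\ is_derive (fun t => fx x t) y (fxy x y) /\
      is_derive (fun t => fy t y) x (fyx x y) /\ is_derive (fun t => fy x t) y (fyy x y) /\
      cont_within in_B fxx x y /\ cont_within in_B fxy x y /\
      cont_within in_B fyx x y /\ cont_within in_B fyy x y /\
      fxx x y + fyy x y = 0.

(* For a direction [al], put [A + i B = (u_al)_x - i (u_al)_y] and
   [X + i Y = e^(i al) ((u_x - v_y) - i (u_y + v_x)) / 2]. Both are holomorphic because [u] and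
   [v] are harmonic, and [det DU = |A + i B|^2 (1 - 2 Re ((X + i Y) / (A + i B)))].
   If [grad u_al] never vanishes in [B] (it cannot vanish on the boundary, where [det DU > 0]),
   this real part is harmonic in [B], continuous up to the boundary and [< 1/2] there, hence
   [< 1/2] in [B] by the maximum principle, i.e. [det DU > 0]. Conversely [det DU > 0] forces
   [grad u <> 0], so [al = 0] works. The maximum principle for real parts of holomorphic functions
   comes from their mean value property on circles, obtained by differentiating the circle mean
   in the radius. *)

From Stdlib Require Import Reals Lra Psatz.
From Coquelicot Require Import Coquelicot.
From Stdlib Require Import Classical ClassicalEpsilon.
Open Scope R_scope.

Definition disk_margin (x y : R) : R := (1 - (x ^ 2 + y ^ 2)) / 8.

Lemma disk_margin_pos x y : in_B x y -> 0 < disk_margin x y.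
Proof. unfold in_B, disk_margin; lra. Qed.

Lemma in_B_near x y x' y' : in_B x y ->
  Rabs (x' - x) < disk_margin x y -> Rabs (y' - y) < disk_margin x y -> in_B x' y'.
Proof.
  unfold in_B, disk_margin; intros H Hx' Hy'.
  set (d := (1 - (x ^ 2 + y ^ 2)) / 8) in *.
  apply Rabs_def2 in Hx'; apply Rabs_def2 in Hy'.
  assert (-1 < x < 1) by (split; nra).
  assert (-1 < y < 1) by (split; nra).
  assert (0 < d <= 1/8) by (unfold d; split; nra).
  replace x' with (x + (x' - x)) by ring; replace y' with (y + (y' - y)) by ring.
  set (a := x' - x) in *; set (b := y' - y) in *.
  assert (2 * x * a <= 2 * d) by nra. assert (2 * y * b <= 2 * d) by nra.
  assert (a * a <= d * d) by nra. assert (b * b <= d * d) by nra.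
  unfold d in *; nra.
Qed.

Lemma locally_2d_in_B (P : R -> R -> Prop) x y :
  in_B x y -> (forall u v, in_B u v -> P u v) -> locally_2d P x y.
Proof.
  intros H HP. exists (mkposreal _ (disk_margin_pos x y H)); simpl; intros u v Hu Hv.
  apply HP, (in_B_near x y); auto.
Qed.

Lemma in_B_circle x y r t : in_B x y -> Rabs r < disk_margin x y ->
  in_B (x + r * cos t) (y + r * sin t).
Proof.
  intros H Hr. pose proof (Rabs_pos r).
  assert (Rabs (cos t) <= 1) by (apply Rabs_le, COS_bound).
  assert (Rabs (sin t) <= 1) by (apply Rabs_le, SIN_bound).
  apply (in_B_near x y); auto;
    [replace (x + r * cos t - x) with (r * cos t) by ring
    |replace (y + r * sin t - y) with (r * sin t) by ring];
    rewrite Rabs_mult; nra.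
Qed.

Lemma locally_Rabs (P : R -> Prop) x d : 0 < d -> (forall y, Rabs (y - x) < d -> P y) -> locally x P.
Proof. intros Hd H. exists (mkposreal d Hd). intros y Hy. apply H. exact Hy. Qed.

Lemma cont_within_subset (D1 D2 : R -> R -> Prop) f x y : (forall a b, D1 a b -> D2 a b) ->
  cont_within D2 f x y -> cont_within D1 f x y.
Proof. intros HD H eps He. destruct (H eps He) as [d [Hd H']]. exists d; split; auto. Qed.

Lemma continuity_2d_pt_of_cont_within_B f x y :
  in_B x y -> cont_within in_B f x y -> continuity_2d_pt f x y.
Proof.
  intros HB H eps. destruct (H eps (cond_pos eps)) as [d [Hd H']].
  assert (Hm : 0 < Rmin d (disk_margin x y)) by (apply Rmin_pos; auto; apply disk_margin_pos; auto).
  exists (mkposreal _ Hm); simpl; intros u v Hu Hv.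
  pose proof (Rmin_l d (disk_margin x y)); pose proof (Rmin_r d (disk_margin x y)).
  apply H'; try lra. apply (in_B_near x y); auto; lra.
Qed.

Lemma cont_within_comp (D : R -> R -> Prop) (h f g : R -> R -> R) x y :
  continuity_2d_pt h (f x y) (g x y) -> cont_within D f x y -> cont_within D g x y ->
  cont_within D (fun a b => h (f a b) (g a b)) x y.
Proof.
  intros Hh Hf Hg eps He.
  destruct (Hh (mkposreal _ He)) as [d Hd].
  destruct (Hf d (cond_pos d)) as [d1 [Hd1 H1]].
  destruct (Hg d (cond_pos d)) as [d2 [Hd2 H2]].
  exists (Rmin d1 d2); split; [apply Rmin_pos; auto|].
  intros x' y' HD Hx Hy. pose proof (Rmin_l d1 d2); pose proof (Rmin_r d1 d2).
  apply Hd; [apply H1|apply H2]; auto; lra.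
Qed.

Lemma cont_within_const D c x y : cont_within D (fun _ _ => c) x y.
Proof. intros eps He; exists 1; split; [lra|]; intros; rewrite Rminus_eq_0, Rabs_R0; auto. Qed.

Lemma cont_within_fst D x y : cont_within D (fun a _ => a) x y.
Proof. intros eps He; exists eps; split; auto. Qed.

Lemma cont_within_snd D x y : cont_within D (fun _ b => b) x y.
Proof. intros eps He; exists eps; split; auto. Qed.

Lemma cont_within_plus D f g x y : cont_within D f x y -> cont_within D g x y ->
  cont_within D (fun a b => f a b + g a b) x y.
Proof.
  apply (cont_within_comp D (fun a b => a + b)).
  apply continuity_2d_pt_plus; [apply continuity_2d_pt_id1|apply continuity_2d_pt_id2].
Qed.

Lemma cont_within_minus D f g x y : cont_within D f x y -> cont_within D g x y ->
  cont_within D (fun a b => f a b - g a b) x y.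
Proof.
  apply (cont_within_comp D (fun a b => a - b)).
  apply continuity_2d_pt_minus; [apply continuity_2d_pt_id1|apply continuity_2d_pt_id2].
Qed.

Lemma cont_within_mult D f g x y : cont_within D f x y -> cont_within D g x y ->
  cont_within D (fun a b => f a b * g a b) x y.
Proof.
  apply (cont_within_comp D (fun a b => a * b)).
  apply continuity_2d_pt_mult; [apply continuity_2d_pt_id1|apply continuity_2d_pt_id2].
Qed.

Lemma cont_within_div D f g x y : cont_within D f x y -> cont_within D g x y -> g x y <> 0 ->
  cont_within D (fun a b => f a b / g a b) x y.
Proof.
  intros Hf Hg Hn. apply (cont_within_comp D (fun a b => a / b)); auto.
  apply continuity_2d_pt_mult; [apply continuity_2d_pt_id1|].
  apply continuity_2d_pt_inv; [apply continuity_2d_pt_id2|auto].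
Qed.

Lemma continuity_2d_pt_comp (h f g : R -> R -> R) x y :
  continuity_2d_pt h (f x y) (g x y) -> continuity_2d_pt f x y -> continuity_2d_pt g x y ->
  continuity_2d_pt (fun a b => h (f a b) (g a b)) x y.
Proof.
  intros Hh Hf Hg eps.
  destruct (Hh eps) as [d Hd]; destruct (Hf d) as [d1 H1]; destruct (Hg d) as [d2 H2].
  exists (mkposreal _ (Rmin_pos _ _ (cond_pos d1) (cond_pos d2))); simpl; intros u v Hu Hv.
  pose proof (Rmin_l d1 d2); pose proof (Rmin_r d1 d2).
  apply Hd; [apply H1|apply H2]; lra.
Qed.

Lemma continuity_pt_comp_2d (h : R -> R -> R) f g t :
  continuity_2d_pt h (f t) (g t) -> continuity_pt f t -> continuity_pt g t ->
  continuity_pt (fun s => h (f s) (g s)) t.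
Proof.
  intros Hh Hf Hg eps He.
  destruct (Hh (mkposreal _ He)) as [d Hd].
  destruct (Hf d (cond_pos d)) as [d1 [Hd1 H1]].
  destruct (Hg d (cond_pos d)) as [d2 [Hd2 H2]].
  exists (Rmin d1 d2); split; [apply Rmin_pos; auto|].
  intros s [Hs0 Hs]; simpl in *; unfold R_dist in *.
  pose proof (Rmin_l d1 d2); pose proof (Rmin_r d1 d2).
  apply Hd; [apply H1|apply H2]; split; auto; lra.
Qed.

Lemma Rabs_between a b c : Rmin a b <= c <= Rmax a b -> Rabs (c - a) <= Rabs (b - a).
Proof.
  unfold Rmin, Rmax; destruct (Rle_dec a b); intros [H1 H2];
  unfold Rabs; repeat destruct Rcase_abs; lra.
Qed.

Lemma is_derive_continuity_pt f x l : is_derive f x l -> continuity_pt f x.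
Proof.
  intros H. apply continuity_pt_filterlim. exact (ex_derive_continuous f x (ex_intro _ l H)).
Qed.

(* Mean value theorem in each variable separately, along the path (x,y) -> (x,v) -> (u,v). *)
Lemma differentiable_of_continuous_partials f f1 f2 x y :
  locally_2d (fun u v => is_derive (fun t => f t v) u (f1 u v) /\
                         is_derive (fun t => f u t) v (f2 u v)) x y ->
  continuity_2d_pt f1 x y -> continuity_2d_pt f2 x y ->
  differentiable_pt_lim f x y (f1 x y) (f2 x y).
Proof.
  intros [d0 H0] H1 H2 eps.
  assert (He2 : 0 < eps / 2) by (destruct eps; simpl; lra).
  destruct (H1 (mkposreal _ He2)) as [d1 Hd1].
  destruct (H2 (mkposreal _ He2)) as [d2 Hd2].
  set (d := Rmin d0 (Rmin d1 d2)).
  assert (Hd : 0 < d) by (apply Rmin_pos; [|apply Rmin_pos]; apply cond_pos).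
  assert (Hd0 : d <= d0) by apply Rmin_l.
  assert (Hd12 : d <= d1 /\ d <= d2).
  { pose proof (Rmin_r d0 (Rmin d1 d2)); pose proof (Rmin_l d1 d2); pose proof (Rmin_r d1 d2).
    unfold d; lra. }
  exists (mkposreal _ Hd); simpl; intros u v Hu Hv.
  assert (H0y : Rabs (y - y) < d0) by (rewrite Rminus_eq_0, Rabs_R0; apply cond_pos).
  destruct (MVT_gen (fun t => f t v) x u (fun t => f1 t v)) as [c1 [Hc1 E1]].
  { intros t Ht. apply (H0 t v); [|lra].
    eapply Rle_lt_trans; [apply (Rabs_between x u); lra|lra]. }
  { intros t Ht. apply (is_derive_continuity_pt _ _ (f1 t v)), (H0 t v); [|lra].
    eapply Rle_lt_trans; [apply (Rabs_between x u); lra|lra]. }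
  destruct (MVT_gen (fun t => f x t) y v (fun t => f2 x t)) as [c2 [Hc2 E2]].
  { intros t Ht. apply (H0 x t); [rewrite Rminus_eq_0, Rabs_R0; apply cond_pos|].
    eapply Rle_lt_trans; [apply (Rabs_between y v); lra|lra]. }
  { intros t Ht. apply (is_derive_continuity_pt _ _ (f2 x t)), (H0 x t);
      [rewrite Rminus_eq_0, Rabs_R0; apply cond_pos|].
    eapply Rle_lt_trans; [apply (Rabs_between y v); lra|lra]. }
  apply Rabs_between in Hc1; apply Rabs_between in Hc2.
  assert (K1 : Rabs (f1 c1 v - f1 x y) < eps / 2) by (apply Hd1; lra).
  assert (K2 : Rabs (f2 x c2 - f2 x y) < eps / 2).
  { apply Hd2; [rewrite Rminus_eq_0, Rabs_R0; apply cond_pos|lra]. }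
  replace (f u v - f x y - (f1 x y * (u - x) + f2 x y * (v - y))) with
    ((f1 c1 v - f1 x y) * (u - x) + (f2 x c2 - f2 x y) * (v - y))
    by (replace (f u v - f x y) with ((f u v - f x v) + (f x v - f x y)) by ring;
        rewrite E1, E2; ring).
  eapply Rle_trans; [apply Rabs_triang|]. rewrite !Rabs_mult.
  pose proof (Rmax_l (Rabs (u - x)) (Rabs (v - y))).
  pose proof (Rmax_r (Rabs (u - x)) (Rabs (v - y))).
  pose proof (Rabs_pos (u - x)); pose proof (Rabs_pos (v - y)).
  pose proof (Rabs_pos (f1 c1 v - f1 x y)); pose proof (Rabs_pos (f2 x c2 - f2 x y)).
  nra.
Qed.

Lemma is_derive_comp_2d h a b t lx ly da db :
  differentiable_pt_lim h (a t) (b t) lx ly -> is_derive a t da -> is_derive b t db ->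
  is_derive (fun z => h (a z) (b z)) t (lx * da + ly * db).
Proof.
  intros H Ha Hb. apply is_derive_Reals.
  apply derivable_pt_lim_comp_2d; auto; apply is_derive_Reals; auto.
Qed.

Definition closed_2d (D : R -> R -> Prop) : Prop :=
  forall x y, ~ D x y -> exists d, 0 < d /\
    forall x' y', Rabs (x' - x) < d -> Rabs (y' - y) < d -> ~ D x' y'.

(* A Lebesgue-number argument: Coquelicot's compactness of the square [-1,1]^2 applied to a
   gauge choosing radii [d] with [Q u v d] on [D] and radii of [D]-free boxes off [D]. *)
Lemma uniform_cover (D : R -> R -> Prop) (Q : R -> R -> R -> Prop) :
  (forall x y, D x y -> -1 <= x <= 1 /\ -1 <= y <= 1) -> closed_2d D ->
  (forall u v, D u v -> exists d, 0 < d /\ Q u v d) ->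
  exists e, 0 < e /\ forall x y, D x y -> exists u v d, D u v /\ Q u v d /\ e <= d /\
     Rabs (x - u) < d /\ Rabs (y - v) < d.
Proof.
  intros Hb Hc HQ.
  assert (Ex : forall u v, exists d : posreal, (D u v -> Q u v d) /\
     (~ D u v -> forall x' y', Rabs (x' - u) < d -> Rabs (y' - v) < d -> ~ D x' y')).
  { intros u v. destruct (classic (D u v)) as [H|H].
    - destruct (HQ u v H) as [d [Hd HQd]]. exists (mkposreal _ Hd); simpl; tauto.
    - destruct (Hc u v H) as [d [Hd HQd]]. exists (mkposreal _ Hd); simpl; tauto. }
  set (delta := fun u v => proj1_sig (constructive_indefinite_description _ (Ex u v))).
  destruct (compactness_value_2d (-1) 1 (-1) 1 delta) as [e He].
  exists e; split; [apply cond_pos|].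
  intros x y Hxy. destruct (Hb x y Hxy) as [Bx By].
  specialize (He x y Bx By). apply NNPP in He.
  destruct He as [u [v [_ [_ [H1 [H2 H3]]]]]].
  pose proof (proj2_sig (constructive_indefinite_description _ (Ex u v))) as [P1 P2].
  fold (delta u v) in P1, P2.
  destruct (classic (D u v)) as [Duv|nD].
  - exists u, v, (delta u v). auto.
  - exfalso. apply (P2 nD x y); auto.
Qed.

Lemma bounded_above_2d (D : R -> R -> Prop) (f : R -> R -> R) :
  (forall x y, D x y -> -1 <= x <= 1 /\ -1 <= y <= 1) -> closed_2d D ->
  (forall x y, D x y -> cont_within D f x y) ->
  exists M, forall x y, D x y -> f x y <= M.
Proof.
  intros Hb Hc Hf.
  destruct (uniform_cover D (fun u v d => d <= / (1 + Rabs (f u v)) /\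
     forall x y, D x y -> Rabs (x - u) < d -> Rabs (y - v) < d -> f x y < f u v + 1) Hb Hc)
    as [e [He Hcov]].
  { intros u v Duv. destruct (Hf u v Duv 1 Rlt_0_1) as [d1 [Hd1 Hd]].
    pose proof (Rabs_pos (f u v)).
    assert (0 < / (1 + Rabs (f u v))) by (apply Rinv_0_lt_compat; lra).
    exists (Rmin d1 (/ (1 + Rabs (f u v)))); split; [apply Rmin_pos; auto|split; [apply Rmin_r|]].
    intros x y Dxy Hx Hy. pose proof (Rmin_l d1 (/ (1 + Rabs (f u v)))).
    assert (Hh : Rabs (f x y - f u v) < 1) by (apply Hd; auto; lra).
    apply Rabs_def2 in Hh. lra. }
  exists (/ e). intros x y Dxy.
  destruct (Hcov x y Dxy) as [u [v [d [Duv [[Hdf Q] [Hed [Hx Hy]]]]]]].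
  assert (f x y < f u v + 1) by (apply Q; auto; rewrite Rabs_minus_sym; auto).
  pose proof (Rabs_pos (f u v)). assert (Hp : 0 < 1 + Rabs (f u v)) by lra.
  assert (1 + Rabs (f u v) <= / e).
  { rewrite <- (Rinv_inv (1 + Rabs (f u v))). apply Rinv_le_contravar; [lra|].
    apply Rinv_0_lt_compat in Hp; lra. }
  pose proof (Rle_abs (f u v)). lra.
Qed.

Lemma extreme_value_2d (D : R -> R -> Prop) (f : R -> R -> R) :
  (exists x y, D x y) ->
  (forall x y, D x y -> -1 <= x <= 1 /\ -1 <= y <= 1) -> closed_2d D ->
  (forall x y, D x y -> cont_within D f x y) ->
  exists x y, D x y /\ forall x' y', D x' y' -> f x' y' <= f x y.
Proof.
  intros [x0 [y0 H0]] Hb Hc Hf.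
  set (E := fun z => exists x y, D x y /\ z = f x y).
  assert (bE : bound E).
  { destruct (bounded_above_2d D f Hb Hc Hf) as [M HM].
    exists M. intros z [x [y [Dxy ->]]]. auto. }
  destruct (completeness E bE) as [M [HM1 HM2]]; [exists (f x0 y0), x0, y0; auto|].
  destruct (classic (exists x y, D x y /\ f x y = M)) as [[x [y [Dxy Exy]]]|Hno].
  { exists x, y; split; auto. intros x' y' D'. rewrite Exy. apply HM1. exists x', y'; auto. }
  exfalso.
  assert (Hlt : forall x y, D x y -> f x y < M).
  { intros x y Dxy. assert (f x y <= M) by (apply HM1; exists x, y; auto).
    destruct (Rle_lt_or_eq_dec _ _ H); auto. exfalso; apply Hno; exists x, y; auto. }
  (* [1 / (M - f)] is continuous on [D], hence bounded, contradicting that [M] is the supremum. *)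
  destruct (bounded_above_2d D (fun x y => 1 / (M - f x y)) Hb Hc) as [K HK].
  { intros x y Dxy. apply (cont_within_div D (fun _ _ => 1)); [apply cont_within_const| |].
    - apply cont_within_minus; [apply cont_within_const|auto].
    - specialize (Hlt x y Dxy); lra. }
  assert (HK' : forall x y, D x y -> / (M - f x y) <= K).
  { intros x y Dxy. specialize (HK x y Dxy). unfold Rdiv in HK. lra. }
  clear HK; rename HK' into HK.
  assert (HK0 : 0 < K).
  { apply Rlt_le_trans with (/ (M - f x0 y0)); [|auto]. apply Rinv_0_lt_compat.
    specialize (Hlt x0 y0 H0); lra. }
  assert (M <= M - / K / 2).
  { apply HM2. intros z [x [y [Dxy ->]]].
    specialize (HK x y Dxy). specialize (Hlt x y Dxy).
    assert (/ K <= M - f x y).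
    { rewrite <- (Rinv_inv (M - f x y)). apply Rinv_le_contravar; [|auto].
      apply Rinv_0_lt_compat; lra. }
    assert (0 < / K) by (apply Rinv_0_lt_compat; lra). lra. }
  assert (0 < / K) by (apply Rinv_0_lt_compat; lra). lra.
Qed.

Lemma continuous_on_circle (h : R -> R -> R) x y r t :
  continuity_2d_pt h (x + r * cos t) (y + r * sin t) ->
  continuous (fun s => h (x + r * cos s) (y + r * sin s)) t.
Proof.
  intros Hh. apply continuity_pt_filterlim, (continuity_pt_comp_2d h); auto;
    (apply continuity_pt_plus; [apply continuity_pt_const; intros ? ?; reflexivity|];
     apply continuity_pt_scal; auto using continuity_cos, continuity_sin).
Qed.

(* [f + i g] is holomorphic in [B] with continuous derivative [f1 - i f2]; the partials of [g]
   are given by the Cauchy-Riemann equations. *)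
Definition cauchy_riemann_B (f g f1 f2 : R -> R -> R) : Prop :=
  forall x y, in_B x y ->
    is_derive (fun t => f t y) x (f1 x y) /\ is_derive (fun t => f x t) y (f2 x y) /\
    is_derive (fun t => g t y) x (- f2 x y) /\ is_derive (fun t => g x t) y (f1 x y) /\
    continuity_2d_pt f1 x y /\ continuity_2d_pt f2 x y.

Definition holomorphic_B (f g : R -> R -> R) : Prop :=
  exists f1 f2 : R -> R -> R, cauchy_riemann_B f g f1 f2.

Section CauchyRiemann.
Variables (f g f1 f2 : R -> R -> R).
Hypothesis Hfg : cauchy_riemann_B f g f1 f2.

Lemma cauchy_riemann_B_differentiable_re x y :
  in_B x y -> differentiable_pt_lim f x y (f1 x y) (f2 x y).
Proof.
  intros Hxy. apply differentiable_of_continuous_partials; try apply (Hfg x y Hxy).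
  apply locally_2d_in_B; auto. intros u v Huv. split; apply (Hfg u v Huv).
Qed.

Lemma cauchy_riemann_B_differentiable_im x y :
  in_B x y -> differentiable_pt_lim g x y (- f2 x y) (f1 x y).
Proof.
  intros Hxy. apply (differentiable_of_continuous_partials g (fun u v => - f2 u v) f1).
  - apply locally_2d_in_B; auto. intros u v Huv. split; apply (Hfg u v Huv).
  - apply continuity_2d_pt_opp, (Hfg x y Hxy).
  - apply (Hfg x y Hxy).
Qed.

Lemma cauchy_riemann_B_continuous x y :
  in_B x y -> continuity_2d_pt f x y /\ continuity_2d_pt g x y.
Proof.
  intros Hxy. split; apply differentiable_continuity_pt.
  - exists (f1 x y), (f2 x y). apply cauchy_riemann_B_differentiable_re; auto.
  - exists (- f2 x y), (f1 x y). apply cauchy_riemann_B_differentiable_im; auto.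
Qed.

Variables (x0 y0 : R).
Hypothesis H0 : in_B x0 y0.

Let d := disk_margin x0 y0.
Let circ (h : R -> R -> R) r t := h (x0 + r * cos t) (y0 + r * sin t).
Let radial r t := circ f1 r t * cos t + circ f2 r t * sin t.

Lemma is_derive_circ_radius r t : Rabs r < d -> is_derive (fun s => circ f s t) r (radial r t).
Proof.
  intros Hr. unfold circ, radial.
  apply is_derive_comp_2d; [apply cauchy_riemann_B_differentiable_re, in_B_circle; auto| |];
    auto_derive; auto; ring.
Qed.

Lemma continuity_2d_pt_radial r t : Rabs r < d -> continuity_2d_pt radial r t.
Proof.
  intros Hr. unfold radial, circ.
  assert (HB : in_B (x0 + r * cos t) (y0 + r * sin t)) by (apply in_B_circle; auto).
  assert (Hc : continuity_2d_pt (fun _ v => cos v) r t /\ continuity_2d_pt (fun _ v => sin v) r t).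
  { split; apply (continuity_1d_2d_pt_comp _ (fun _ v => v));
      auto using continuity_cos, continuity_sin, continuity_2d_pt_id2. }
  assert (Hpt : continuity_2d_pt (fun u v => x0 + u * cos v) r t /\
                continuity_2d_pt (fun u v => y0 + u * sin v) r t).
  { split; apply continuity_2d_pt_plus; auto using continuity_2d_pt_const;
      apply continuity_2d_pt_mult; tauto || apply continuity_2d_pt_id1. }
  apply continuity_2d_pt_plus; apply continuity_2d_pt_mult; try tauto;
    apply (continuity_2d_pt_comp _ (fun u v => x0 + u * cos v) (fun u v => y0 + u * sin v));
    try tauto; apply (Hfg _ _ HB).
Qed.

Lemma continuous_radial r t : Rabs r < d -> continuous (radial r) t.
Proof.
  intros Hr.
  apply continuity_pt_filterlim, (continuity_pt_comp_2d radial (fun _ => r) (fun t => t)).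
  - apply continuity_2d_pt_radial; auto.
  - apply continuity_pt_const; intros ? ?; reflexivity.
  - apply continuity_pt_id.
Qed.

Lemma is_derive_circle_mean r : Rabs r < d ->
  is_derive (fun s => RInt (circ f s) 0 (2 * PI)) r (RInt (radial r) 0 (2 * PI)).
Proof.
  intros Hr.
  assert (Hq : 0 < d - Rabs r) by lra.
  assert (Hloc : forall s, Rabs (s - r) < d - Rabs r -> Rabs s < d).
  { intros s Hs. replace s with ((s - r) + r) by ring.
    eapply Rle_lt_trans; [apply Rabs_triang|lra]. }
  replace (RInt (radial r) 0 (2 * PI)) with
    (RInt (fun t => Derive (fun s => circ f s t) r) 0 (2 * PI))
    by (apply RInt_ext; intros t _; apply is_derive_unique, is_derive_circ_radius; auto).
  apply (is_derive_RInt_param (circ f)).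
  - apply (locally_Rabs _ r (d - Rabs r) Hq). intros s Hs t _.
    eexists. apply is_derive_circ_radius; auto.
  - intros t _. apply continuity_2d_pt_ext_loc with (f := radial);
      [|apply continuity_2d_pt_radial; auto].
    exists (mkposreal _ Hq); simpl; intros u v Hu _.
    symmetry. apply is_derive_unique, is_derive_circ_radius; auto.
  - apply (locally_Rabs _ r (d - Rabs r) Hq). intros s Hs.
    apply (@ex_RInt_continuous R_CompleteNormedModule). intros t _.
    apply continuous_on_circle, differentiable_continuity_pt.
    exists (f1 (x0 + s * cos t) (y0 + s * sin t)), (f2 (x0 + s * cos t) (y0 + s * sin t)).
    apply cauchy_riemann_B_differentiable_re, in_B_circle; auto.
Qed.

(* By Cauchy-Riemann, [r * radial r t] is the [t]-derivative of [circ g r t], whose values at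
   [0] and [2 PI] agree. *)
Lemma RInt_radial r : 0 < r < d -> RInt (radial r) 0 (2 * PI) = 0.
Proof.
  intros Hr. assert (Ha : Rabs r < d) by (rewrite Rabs_pos_eq; lra).
  assert (Hi : is_RInt (radial r) 0 (2 * PI) (minus (/ r * circ g r (2 * PI)) (/ r * circ g r 0))).
  { apply (is_RInt_derive (fun t => / r * circ g r t)).
    - intros t _. unfold circ.
      replace (radial r t) with
        (/ r * (- f2 (x0 + r * cos t) (y0 + r * sin t) * (- r * sin t) +
                f1 (x0 + r * cos t) (y0 + r * sin t) * (r * cos t)))
        by (unfold radial, circ; field; lra).
      apply is_derive_scal, is_derive_comp_2d;
        [apply cauchy_riemann_B_differentiable_im, in_B_circle; auto| |];
        auto_derive; auto; ring.
    - intros t _. apply continuous_radial; auto. }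
  rewrite (is_RInt_unique _ _ _ _ Hi). unfold circ.
  rewrite cos_2PI, sin_2PI, cos_0, sin_0. unfold minus, plus, opp; simpl. ring.
Qed.

Lemma circle_mean_value r : 0 < r < d ->
  RInt (fun t => f (x0 + r * cos t) (y0 + r * sin t)) 0 (2 * PI) = 2 * PI * f x0 y0.
Proof.
  intros Hr.
  set (df := fun s => if Rlt_dec 0 s then RInt (radial s) 0 (2 * PI) else 0).
  destruct (MVT_gen (fun s => RInt (circ f s) 0 (2 * PI)) 0 r df) as [c [Hc Ec]];
    rewrite Rmin_left, Rmax_right in * by lra.
  - intros s Hs. unfold df; destruct (Rlt_dec 0 s); [|lra].
    apply is_derive_circle_mean. rewrite Rabs_pos_eq; lra.
  - intros s Hs. eapply is_derive_continuity_pt, is_derive_circle_mean. rewrite Rabs_pos_eq; lra.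
  - assert (Hdf : df c = 0) by (unfold df; destruct (Rlt_dec 0 c); auto; apply RInt_radial; lra).
    rewrite Hdf, Rmult_0_l in Ec.
    assert (Hcirc0 : RInt (circ f 0) 0 (2 * PI) = 2 * PI * f x0 y0).
    { rewrite (RInt_ext _ (fun _ => f x0 y0)).
      - rewrite RInt_const. unfold scal; simpl; unfold mult; simpl. ring.
      - intros t _. unfold circ. rewrite !Rmult_0_l, !Rplus_0_r. reflexivity. }
    unfold circ in *. lra.
Qed.

End CauchyRiemann.

Lemma continuity_2d_pt_sqnorm x y : continuity_2d_pt (fun a b => a ^ 2 + b ^ 2) x y.
Proof.
  apply continuity_2d_pt_ext with (f := fun a b => a * a + b * b); [intros; ring|].
  apply continuity_2d_pt_plus; apply continuity_2d_pt_mult;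
    auto using continuity_2d_pt_id1, continuity_2d_pt_id2.
Qed.

Lemma closed_2d_sqnorm (P : R -> Prop) :
  (forall z, ~ P z -> exists e, 0 < e /\ forall w, Rabs (w - z) < e -> ~ P w) ->
  closed_2d (fun x y => P (x ^ 2 + y ^ 2)).
Proof.
  intros HP x y Hn. destruct (HP _ Hn) as [e [He H]].
  destruct (continuity_2d_pt_sqnorm x y (mkposreal _ He)) as [d Hd].
  exists d; split; [apply cond_pos|]. intros; apply H, Hd; auto.
Qed.

Lemma closed_in_closB : closed_2d in_closB.
Proof.
  apply (closed_2d_sqnorm (fun z => z <= 1)). intros z Hz. exists (z - 1); split; [lra|].
  intros w Hw. apply Rabs_def2 in Hw. lra.
Qed.

Lemma closed_in_bdB : closed_2d in_bdB.
Proof.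
  apply (closed_2d_sqnorm (fun z => z = 1)). intros z Hz. exists (Rabs (z - 1)).
  split; [apply Rabs_pos_lt; lra|]. intros w Hw ->. rewrite Rabs_minus_sym in Hw. lra.
Qed.

Lemma in_closB_square x y : in_closB x y -> -1 <= x <= 1 /\ -1 <= y <= 1.
Proof. unfold in_closB; intros; split; split; nra. Qed.

Lemma is_RInt_sqnorm_circle x y r :
  is_RInt (fun t => (x + r * cos t) ^ 2 + (y + r * sin t) ^ 2) 0 (2 * PI)
    (2 * PI * (x ^ 2 + y ^ 2 + r ^ 2)).
Proof.
  replace (2 * PI * (x ^ 2 + y ^ 2 + r ^ 2)) with
    (minus ((x ^ 2 + y ^ 2 + r ^ 2) * (2 * PI) + 2 * r * (x * sin (2 * PI) - y * cos (2 * PI)))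
           ((x ^ 2 + y ^ 2 + r ^ 2) * 0 + 2 * r * (x * sin 0 - y * cos 0)))
    by (rewrite cos_2PI, sin_2PI, cos_0, sin_0; unfold minus, plus, opp; simpl; ring).
  apply (is_RInt_derive (fun t => (x ^ 2 + y ^ 2 + r ^ 2) * t + 2 * r * (x * sin t - y * cos t))).
  - intros t _. auto_derive; auto. pose proof (sin2_cos2 t). unfold Rsqr in *. nra.
  - intros t _. apply (continuous_on_circle (fun a b => a ^ 2 + b ^ 2)), continuity_2d_pt_sqnorm.
Qed.

(* Over a small circle the mean of [f] is [f x y] while the mean of [x^2 + y^2] is larger than
   its value at the centre: [f + eps (x^2 + y^2)] is strictly subharmonic. *)
Lemma no_interior_max f g eps x y : holomorphic_B f g -> 0 < eps -> in_B x y ->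
  ~ (forall x' y', in_closB x' y' ->
       f x' y' + eps * (x' ^ 2 + y' ^ 2) <= f x y + eps * (x ^ 2 + y ^ 2)).
Proof.
  intros [f1 [f2 Hfg]] He Hxy Hmax.
  set (r := disk_margin x y / 2).
  assert (Hr : 0 < r < disk_margin x y) by (pose proof (disk_margin_pos x y Hxy); unfold r; lra).
  assert (Hin : forall t, in_B (x + r * cos t) (y + r * sin t))
    by (intros t; apply in_B_circle; auto; rewrite Rabs_pos_eq; lra).
  set (ph := fun t => f (x + r * cos t) (y + r * sin t)).
  assert (Iph : is_RInt ph 0 (2 * PI) (2 * PI * f x y)).
  { rewrite <- (circle_mean_value f g f1 f2 Hfg x y Hxy r Hr).
    apply (RInt_correct ph), (@ex_RInt_continuous R_CompleteNormedModule).
    intros t _. apply continuous_on_circle, (cauchy_riemann_B_continuous f g f1 f2 Hfg), Hin. }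
  pose proof (is_RInt_plus _ _ _ _ _ _ Iph
    (is_RInt_scal _ _ _ eps _ (is_RInt_sqnorm_circle x y r))) as Ipsi.
  pose proof (@is_RInt_const R_NormedModule 0 (2 * PI) (f x y + eps * (x ^ 2 + y ^ 2))) as Ic.
  pose proof PI_RGT_0.
  assert (Hle := is_RInt_le _ _ 0 (2 * PI) _ _ ltac:(lra) Ipsi Ic
    (fun t _ => Hmax _ _ (Rlt_le _ _ (Hin t)))).
  unfold plus, scal in Hle; simpl in Hle; unfold mult in Hle; simpl in Hle.
  assert (0 < eps * PI * (r * r)) by (apply Rmult_lt_0_compat; nra).
  nra.
Qed.

Lemma maximum_principle f g c : holomorphic_B f g ->
  (forall x y, in_closB x y -> cont_within in_closB f x y) ->
  (forall x y, in_bdB x y -> f x y < c) ->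
  forall x y, in_B x y -> f x y < c.
Proof.
  intros Hfg Hc Hbd.
  destruct (extreme_value_2d in_bdB f) as [qx [qy [Hq Hqmax]]].
  - exists 1, 0; unfold in_bdB; ring.
  - intros x y H; apply in_closB_square; unfold in_closB, in_bdB in *; lra.
  - exact closed_in_bdB.
  - intros x y H. apply (cont_within_subset _ in_closB); [unfold in_bdB, in_closB; intros; lra|].
    apply Hc; unfold in_closB, in_bdB in *; lra.
  - set (eps := (c - f qx qy) / 2).
    assert (He : 0 < eps) by (specialize (Hbd qx qy Hq); unfold eps; lra).
    set (psi := fun a b => f a b + eps * (a ^ 2 + b ^ 2)).
    destruct (extreme_value_2d in_closB psi) as [zx [zy [Hz Hzmax]]].
    + exists 0, 0. unfold in_closB; lra.
    + exact in_closB_square.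
    + exact closed_in_closB.
    + intros x y H. apply cont_within_plus; auto.
      apply cont_within_mult; [apply cont_within_const|].
      apply (cont_within_comp _ (fun a b => a ^ 2 + b ^ 2));
        auto using cont_within_fst, cont_within_snd, continuity_2d_pt_sqnorm.
    + assert (Hzb : in_bdB zx zy).
      { destruct (Rle_lt_or_eq_dec _ _ Hz) as [HzB|]; auto.
        exfalso; apply (no_interior_max f g eps zx zy Hfg He HzB Hzmax). }
      intros x y HB.
      pose proof (Hzmax x y (Rlt_le _ _ HB)). pose proof (Hqmax zx zy Hzb).
      pose proof (Hbd qx qy Hq). assert (0 <= x ^ 2 + y ^ 2) by nra.
      unfold psi, eps, in_bdB in *. rewrite Hzb in *. nra.
Qed.

Ltac derive_from_hyps :=
  auto_derive;
  [ repeat split; try assumption; eexists; eassumption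
  | repeat match goal with
    | H : is_derive _ ?x ?l |- context [Derive ?g ?x] =>
      let E := fresh in
      assert (E : Derive g x = l) by (apply is_derive_unique; exact H);
      rewrite E; clear E
    end ].

Ltac continuity_2d_arith :=
  repeat first [ apply continuity_2d_pt_plus | apply continuity_2d_pt_minus
               | apply continuity_2d_pt_mult | apply continuity_2d_pt_opp
               | apply continuity_2d_pt_const | assumption ].

Lemma holomorphic_B_ext f g F G : holomorphic_B f g ->
  (forall x y, f x y = F x y) -> (forall x y, g x y = G x y) -> holomorphic_B F G.
Proof.
  intros [f1 [f2 H]] Ef Eg. exists f1, f2. intros x y Hxy.
  destruct (H x y Hxy) as [Dfx [Dfy [Dgx [Dgy Hc]]]].
  split; [exact (is_derive_ext _ _ _ _ (fun t => Ef t y) Dfx)|].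
  split; [exact (is_derive_ext _ _ _ _ (fun t => Ef x t) Dfy)|].
  split; [exact (is_derive_ext _ _ _ _ (fun t => Eg t y) Dgx)|].
  split; [exact (is_derive_ext _ _ _ _ (fun t => Eg x t) Dgy)|exact Hc].
Qed.

Lemma holomorphic_B_const p q : holomorphic_B (fun _ _ => p) (fun _ _ => q).
Proof.
  exists (fun _ _ => 0), (fun _ _ => 0). intros x y _.
  rewrite Ropp_0. pose proof (is_derive_const p x); pose proof (is_derive_const p y).
  pose proof (is_derive_const q x); pose proof (is_derive_const q y).
  pose proof (continuity_2d_pt_const x y 0). tauto.
Qed.

Lemma holomorphic_B_plus f g f' g' : holomorphic_B f g -> holomorphic_B f' g' ->
  holomorphic_B (fun x y => f x y + f' x y) (fun x y => g x y + g' x y).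
Proof.
  intros [f1 [f2 H]] [f1' [f2' H']].
  exists (fun x y => f1 x y + f1' x y), (fun x y => f2 x y + f2' x y). intros x y Hxy.
  destruct (H x y Hxy) as [? [? [? [? [? ?]]]]]; destruct (H' x y Hxy) as [? [? [? [? [? ?]]]]].
  refine (conj _ (conj _ (conj _ (conj _ (conj _ _))))); try continuity_2d_arith;
    derive_from_hyps; ring.
Qed.

Lemma holomorphic_B_mul f g f' g' : holomorphic_B f g -> holomorphic_B f' g' ->
  holomorphic_B (fun x y => f x y * f' x y - g x y * g' x y)
                (fun x y => f x y * g' x y + g x y * f' x y).
Proof.
  intros [f1 [f2 H]] [f1' [f2' H']].
  exists (fun x y => f1 x y * f' x y + f x y * f1' x y + f2 x y * g' x y + g x y * f2' x y),
         (fun x y => f2 x y * f' x y + f x y * f2' x y - f1 x y * g' x y - g x y * f1' x y).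
  intros x y Hxy.
  destruct (H x y Hxy) as [? [? [? [? [? ?]]]]]; destruct (H' x y Hxy) as [? [? [? [? [? ?]]]]].
  destruct (cauchy_riemann_B_continuous f g f1 f2 H x y Hxy).
  destruct (cauchy_riemann_B_continuous f' g' f1' f2' H' x y Hxy).
  refine (conj _ (conj _ (conj _ (conj _ (conj _ _))))); try continuity_2d_arith;
    derive_from_hyps; ring.
Qed.

Lemma holomorphic_B_inv f g : holomorphic_B f g ->
  (forall x y, in_B x y -> f x y ^ 2 + g x y ^ 2 <> 0) ->
  holomorphic_B (fun x y => f x y / (f x y ^ 2 + g x y ^ 2))
                (fun x y => - g x y / (f x y ^ 2 + g x y ^ 2)).
Proof.
  intros [f1 [f2 H]] HN.
  set (N := fun x y => f x y ^ 2 + g x y ^ 2).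
  exists (fun x y => (f1 x y * N x y - 2 * f x y * (f x y * f1 x y - g x y * f2 x y)) / N x y ^ 2),
         (fun x y => (f2 x y * N x y - 2 * f x y * (f x y * f2 x y + g x y * f1 x y)) / N x y ^ 2).
  intros x y Hxy. specialize (HN x y Hxy).
  destruct (H x y Hxy) as [? [? [? [? [? ?]]]]].
  destruct (cauchy_riemann_B_continuous f g f1 f2 H x y Hxy).
  assert (HN2 : N x y ^ 2 <> 0) by (apply pow_nonzero; auto).
  refine (conj _ (conj _ (conj _ (conj _ (conj _ _))))); unfold N in *;
    try (unfold Rdiv; apply continuity_2d_pt_mult;
         [|apply continuity_2d_pt_inv; [|auto]]; simpl; continuity_2d_arith);
    derive_from_hyps; auto; field; auto.
Qed.

Lemma holomorphic_B_cscale p q f g : holomorphic_B f g ->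
  holomorphic_B (fun x y => p * f x y - q * g x y) (fun x y => p * g x y + q * f x y).
Proof.
  intros H.
  apply (holomorphic_B_ext _ _ _ _ (holomorphic_B_mul _ _ _ _ (holomorphic_B_const p q) H));
    intros; ring.
Qed.

Lemma holomorphic_B_div f g f' g' : holomorphic_B f g -> holomorphic_B f' g' ->
  (forall x y, in_B x y -> f' x y ^ 2 + g' x y ^ 2 <> 0) ->
  holomorphic_B (fun x y => (f x y * f' x y + g x y * g' x y) / (f' x y ^ 2 + g' x y ^ 2))
                (fun x y => (g x y * f' x y - f x y * g' x y) / (f' x y ^ 2 + g' x y ^ 2)).
Proof.
  intros H H' HN.
  apply (holomorphic_B_ext _ _ _ _ (holomorphic_B_mul _ _ _ _ H (holomorphic_B_inv _ _ H' HN)));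
    intros; unfold Rdiv; ring.
Qed.

Lemma mixed_partials_eq_B (f f1 f2 f12 f21 : R -> R -> R) :
  (forall x y, in_B x y ->
     is_derive (fun t => f t y) x (f1 x y) /\ is_derive (fun t => f x t) y (f2 x y) /\
     is_derive (fun t => f1 x t) y (f12 x y) /\ is_derive (fun t => f2 t y) x (f21 x y) /\
     continuity_2d_pt f12 x y /\ continuity_2d_pt f21 x y) ->
  forall x y, in_B x y -> f12 x y = f21 x y.
Proof.
  intros H x y Hxy.
  assert (L2 : forall u v, in_B u v -> locally u (fun z => Derive (fun t => f z t) v = f2 z v)).
  { intros u v Huv. apply (locally_Rabs _ u _ (disk_margin_pos u v Huv)). intros z Hz.
    apply is_derive_unique, (H z v), (in_B_near u v); auto.
    rewrite Rminus_eq_0, Rabs_R0; apply disk_margin_pos; auto. }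
  assert (L1 : forall u v, in_B u v -> locally v (fun z => Derive (fun t => f t z) u = f1 u z)).
  { intros u v Huv. apply (locally_Rabs _ v _ (disk_margin_pos u v Huv)). intros z Hz.
    apply is_derive_unique, (H u z), (in_B_near u v); auto.
    rewrite Rminus_eq_0, Rabs_R0; apply disk_margin_pos; auto. }
  assert (E21 : forall u v, in_B u v -> Derive (fun z => Derive (fun t => f z t) v) u = f21 u v).
  { intros u v Huv. rewrite <- (is_derive_unique _ _ _ (proj1 (proj2 (proj2 (proj2 (H u v Huv)))))).
    apply Derive_ext_loc, L2; auto. }
  assert (E12 : forall u v, in_B u v -> Derive (fun z => Derive (fun t => f t z) u) v = f12 u v).
  { intros u v Huv. rewrite <- (is_derive_unique _ _ _ (proj1 (proj2 (proj2 (H u v Huv))))).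
    apply Derive_ext_loc, L1; auto. }
  rewrite <- E21, <- E12 by auto. symmetry. apply Schwarz.
  - apply locally_2d_in_B; auto. intros u v Huv. destruct (H u v Huv) as [D1 [D2 [D12 [D21 _]]]].
    split; [eexists; eauto|split; [eexists; eauto|split]].
    + exists (f21 u v). eapply is_derive_ext_loc; [|exact D21].
      apply (filter_imp _ _ (fun z Ez => eq_sym Ez) (L2 u v Huv)).
    + exists (f12 u v). eapply is_derive_ext_loc; [|exact D12].
      apply (filter_imp _ _ (fun z Ez => eq_sym Ez) (L1 u v Huv)).
  - apply continuity_2d_pt_ext_loc with (f := f21); [|apply (H x y Hxy)].
    apply locally_2d_in_B; auto. intros u v Huv. symmetry; apply E21; auto.
  - apply continuity_2d_pt_ext_loc with (f := f12); [|apply (H x y Hxy)].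
    apply locally_2d_in_B; auto. intros u v Huv. symmetry; apply E12; auto.
Qed.

(* [u_x - i u_y] is holomorphic: Cauchy-Riemann is Schwarz's theorem plus the Laplace equation. *)
Lemma harmonic_B_gradient_holomorphic u ux uy :
  harmonic_B u ux uy -> holomorphic_B ux (fun x y => - uy x y).
Proof.
  intros [Hu [uxx [uxy [uyx [uyy H]]]]].
  assert (Hsym : forall x y, in_B x y -> uxy x y = uyx x y).
  { apply (mixed_partials_eq_B u ux uy). intros x y Hxy.
    destruct (Hu x y Hxy); destruct (H x y Hxy) as [? [? [? [? [? [? [? [? ?]]]]]]]].
    repeat (split; [assumption|]).
    split; apply continuity_2d_pt_of_cont_within_B; auto. }
  exists uxx, uxy. intros x y Hxy. specialize (Hsym x y Hxy).
  destruct (H x y Hxy) as [Dxx [Dxy [Dyx [Dyy [Cxx [Cxy [_ [_ Hlap]]]]]]]].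
  refine (conj Dxx (conj Dxy (conj _ (conj _ (conj _ _))))).
  - derive_from_hyps. lra.
  - derive_from_hyps. lra.
  - apply continuity_2d_pt_of_cont_within_B; auto.
  - apply continuity_2d_pt_of_cont_within_B; auto.
Qed.

Lemma partials_C1_closB f fx fy x y : C1_closB f fx fy -> in_B x y ->
  dx f x y = fx x y /\ dy f x y = fy x y.
Proof. intros [H _] Hxy. unfold dx, dy; split; apply is_derive_unique, (H x y Hxy). Qed.

Lemma partials_lincomb_C1_closB u v ux uy vx vy p q x y :
  C1_closB u ux uy -> C1_closB v vx vy -> in_B x y ->
  dx (fun s t => p * u s t + q * v s t) x y = p * ux x y + q * vx x y /\
  dy (fun s t => p * u s t + q * v s t) x y = p * uy x y + q * vy x y.
Proof.
  intros [Hu _] [Hv _] Hxy. destruct (Hu x y Hxy), (Hv x y Hxy).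
  unfold dx, dy; split; apply is_derive_unique; derive_from_hyps; ring.
Qed.

Section Jacobian.
Variables (u v ux uy vx vy : R -> R -> R) (al : R).

Let A x y := cos al * ux x y + sin al * vx x y.
Let B x y := - (cos al * uy x y + sin al * vy x y).
Let X x y := (cos al * (ux x y - vy x y) + sin al * (uy x y + vx x y)) / 2.
Let Y x y := (sin al * (ux x y - vy x y) - cos al * (uy x y + vx x y)) / 2.

Lemma jacobian_decomposition x y :
  ux x y * vy x y - uy x y * vx x y =
  A x y ^ 2 + B x y ^ 2 - 2 * (X x y * A x y + Y x y * B x y).
Proof.
  pose proof (sin2_cos2 al) as K. unfold Rsqr in K.
  unfold A, B, X, Y. transitivity ((sin al * sin al + cos al * cos al) *
    (ux x y * vy x y - uy x y * vx x y)); [rewrite K; ring|field].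
Qed.

Hypotheses (hu1 : C1_closB u ux uy) (hv1 : C1_closB v vx vy)
  (hu : harmonic_B u ux uy) (hv : harmonic_B v vx vy)
  (hbd : forall x y, in_bdB x y -> ux x y * vy x y - uy x y * vx x y > 0)
  (hgrad : forall x y, in_B x y ->
     (cos al * ux x y + sin al * vx x y, cos al * uy x y + sin al * vy x y) <> (0, 0)).

Lemma grad_sqnorm_neq0 x y : in_closB x y -> A x y ^ 2 + B x y ^ 2 <> 0.
Proof.
  intros Hxy HN.
  assert (HA : A x y = 0) by nra. assert (HB : B x y = 0) by nra.
  destruct (Rle_lt_or_eq_dec _ _ Hxy) as [HBxy|Hbd].
  - apply (hgrad x y HBxy). unfold A, B in HA, HB. f_equal; lra.
  - specialize (hbd x y Hbd). rewrite jacobian_decomposition, HA, HB in hbd. lra.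
Qed.

Let phi x y := (X x y * A x y + Y x y * B x y) / (A x y ^ 2 + B x y ^ 2).

Lemma holomorphic_B_phi : exists psi, holomorphic_B phi psi.
Proof.
  pose proof (harmonic_B_gradient_holomorphic u ux uy hu) as Hu.
  pose proof (harmonic_B_gradient_holomorphic v vx vy hv) as Hv.
  assert (HZ : holomorphic_B A B).
  { apply (holomorphic_B_ext _ _ _ _ (holomorphic_B_plus _ _ _ _
      (holomorphic_B_cscale (cos al) 0 _ _ Hu) (holomorphic_B_cscale (sin al) 0 _ _ Hv)));
      unfold A, B; intros; ring. }
  assert (HW : holomorphic_B X Y).
  { apply (holomorphic_B_ext _ _ _ _ (holomorphic_B_cscale (cos al / 2) (sin al / 2) _ _
      (holomorphic_B_plus _ _ _ _ Hu (holomorphic_B_cscale 0 (-1) _ _ Hv))));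
      unfold X, Y; intros; field. }
  eexists. apply (holomorphic_B_div _ _ _ _ HW HZ).
  intros x y Hxy. apply grad_sqnorm_neq0, Rlt_le, Hxy.
Qed.

Lemma cont_within_phi x y : in_closB x y -> cont_within in_closB phi x y.
Proof.
  intros Hxy. destruct hu1 as [_ Hu]; destruct hv1 as [_ Hv].
  destruct (Hu x y Hxy) as [_ [Cux Cuy]]; destruct (Hv x y Hxy) as [_ [Cvx Cvy]].
  assert (CA : cont_within in_closB A x y /\ cont_within in_closB B x y).
  { unfold A, B. split;
      [|apply (cont_within_comp _ (fun a _ => - a) _ (fun _ _ => 0));
        [apply continuity_2d_pt_opp, continuity_2d_pt_id1| |apply cont_within_const]];
      apply cont_within_plus; apply cont_within_mult; auto; apply cont_within_const. }
  assert (CX : cont_within in_closB X x y /\ cont_within in_closB Y x y).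
  { unfold X, Y. split; apply (cont_within_div _ _ (fun _ _ => 2));
      try apply cont_within_const; try lra;
      [apply cont_within_plus|apply cont_within_minus]; apply cont_within_mult;
      try apply cont_within_const; auto using cont_within_plus, cont_within_minus. }
  unfold phi. apply cont_within_div; [| |apply grad_sqnorm_neq0; auto].
  - apply cont_within_plus; apply cont_within_mult; tauto.
  - apply (cont_within_comp _ (fun a b => a ^ 2 + b ^ 2));
      [apply continuity_2d_pt_sqnorm|tauto|tauto].
Qed.

Lemma jacobian_pos x y : in_B x y -> ux x y * vy x y - uy x y * vx x y > 0.
Proof.
  assert (Hdet : forall x y, in_closB x y ->
    ux x y * vy x y - uy x y * vx x y = (A x y ^ 2 + B x y ^ 2) * (1 - 2 * phi x y)).
  { intros x' y' Hxy. rewrite jacobian_decomposition. unfold phi. field.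
    apply grad_sqnorm_neq0; auto. }
  assert (HN : forall x y, in_closB x y -> 0 < A x y ^ 2 + B x y ^ 2).
  { intros x' y' Hxy. pose proof (grad_sqnorm_neq0 x' y' Hxy). nra. }
  destruct holomorphic_B_phi as [psi Hphi].
  intros Hxy. rewrite Hdet by (apply Rlt_le, Hxy).
  apply Rmult_lt_0_compat; [apply HN, Rlt_le, Hxy|].
  enough (phi x y < 1 / 2) by lra.
  apply (maximum_principle phi psi); auto using cont_within_phi.
  intros x' y' Hbd. assert (Hc : in_closB x' y') by (unfold in_closB, in_bdB in *; lra).
  specialize (hbd x' y' Hbd). rewrite Hdet in hbd by auto.
  specialize (HN x' y' Hc). nra.
Qed.

End Jacobian.

Theorem corollary3p3 (u v ux uy vx vy : R -> R -> R)
  (hu1 : C1_closB u ux uy) (hv1 : C1_closB v vx vy)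
  (hu : harmonic_B u ux uy) (hv : harmonic_B v vx vy)
  (hbd : forall x y, in_bdB x y -> ux x y * vy x y - uy x y * vx x y > 0) :
  (forall x y, in_B x y -> dx u x y * dy v x y - dy u x y * dx v x y > 0) <->
  (exists alpha : R, 0 <= alpha <= 2 * PI /\
     forall x y, in_B x y ->
       let ua := fun s t => cos alpha * u s t + sin alpha * v s t in
       (dx ua x y, dy ua x y) <> (0, 0)).
Proof.
  assert (Hdet : forall x y, in_B x y ->
    dx u x y * dy v x y - dy u x y * dx v x y = ux x y * vy x y - uy x y * vx x y).
  { intros x y Hxy. destruct (partials_C1_closB u ux uy x y hu1 Hxy) as [-> ->].
    destruct (partials_C1_closB v vx vy x y hv1 Hxy) as [-> ->]. reflexivity. }
  split.
  - intros Hpos. exists 0. split; [pose proof PI_RGT_0; lra|].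
    intros x y Hxy ua Hgrad. specialize (Hpos x y Hxy). rewrite Hdet in Hpos by auto.
    unfold ua in Hgrad. destruct (partials_lincomb_C1_closB u v ux uy vx vy (cos 0) (sin 0) x y
      hu1 hv1 Hxy) as [E1 E2]. rewrite E1, E2, cos_0, sin_0 in Hgrad.
    injection Hgrad; intros. nra.
  - intros [al [_ Hgrad]] x y Hxy. rewrite Hdet by auto.
    apply (jacobian_pos u v ux uy vx vy al); auto.
    intros x' y' Hxy'. specialize (Hgrad x' y' Hxy'). simpl in Hgrad.
    destruct (partials_lincomb_C1_closB u v ux uy vx vy (cos al) (sin al) x' y' hu1 hv1 Hxy')
      as [E1 E2]. rewrite E1, E2 in Hgrad. exact Hgrad.
Qed.
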